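(* Consider the semidiscrete homogenized eddy current system with circuit coupling, in the unknowns $a(t)\in\mathbb{R}^m$, $i_R(t)\in\mathbb{R}$, $v_R(t)\in\mathbb{R}$: \begin{align*} C^\top M_{\nu,\tau}C\tfrac{d}{dt}a+C^\top M_\nu C a&=Xi_R,\\ X^\top\tfrac{d}{dt}a&=v_R, \end{align*} with internal variable $x_R=a$. Under the assumptions listed in the context, this system is a strongly resistance-like element.
   Context: Assumptions: $C\in\mathbb{R}^{f\times m}$ (gauged discrete curl with homogeneous Dirichlet conditions incorporated) has full column rank; $M_\nu\in\mathbb{R}^{f\times f}$ (reluctivity matrix) is symmetric positive definite; $M_{\nu,\tau}\in\mathbb{R}^{f\times f}$ (reluctivity weighted by the cable time constant) is symmetric positive semidefinite; $X\in\mathbb{R}^m$ is the discretized winding density function, a nonzero vector; $Q_\tau$ is the orthogonal projector onto $\ker(C^\top M_{\nu,\tau}C)$, $P_\tau=I-Q_\tau$, and $Q_\tau^\top X=0$ (no excitation outside the coils). Definitions: a function $F(u,y)$ is strongly monotone with respect to $u$ if there is $c>0$ with $\langle F(u,y)-F(\bar u,y),u-\bar u\rangle\ge c\|u-\bar u\|^2$ for all $y,u,\bar u$. A resistance-like element is one described by $f_R(\frac{d}{dt}d_R(x_R,i_R,v_R,t),x_R,i_R,v_R,t)=0$ such that at most one differentiation with respect to $t$ is needed to obtain $x_R'=\varphi_R(x_R,i_R,v_R,t)$, $i_R'=g_R(v_R',x_R,i_R,v_R,t)$; it is strongly resistance-like if additionally $g_R(v_R',x_R,i_R,v_R,t)$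 is continuous and strongly monotone with respect to $v_R'$. *)

From HB Require Import structures.
From mathcomp Require Import all_boot all_order all_algebra.
From mathcomp Require Import all_classical all_reals all_analysis.
Set Implicit Arguments. Unset Strict Implicit. Unset Printing Implicit Defensive.
Import Order.TTheory GRing.Theory Num.Theory.
Import numFieldNormedType.Exports.
Local Open Scope ring_scope.

(* Vectors in R^n are column vectors 'cV[R]_n; scalars (i_R, v_R) are 'cV[R]_1. *)

Definition dotv (R : realType) (n : nat) (u w : 'cV[R]_n) : R :=
  \sum_(k < n) u k 0 * w k 0.

Definition strongly_monotone_wrt (R : realType) (n : nat) (Y : Type)
    (F : 'cV[R]_n -> Y -> 'cV[R]_n) : Prop :=
  exists c : R, 0 < c /\
    forall (y : Y) (u ub : 'cV[R]_n),
      dotv (F u y - F ub y) (u - ub) >= c * dotv (u - ub) (u - ub).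

(* A (nonlinear, time dependent) element
     f_R( d/dt d_R(x_R,i_R,v_R,t), x_R, i_R, v_R, t) = 0
   is described by fR and dR.  [resistance_like_with fR dR phi g] says that
   the derivative array of order one (the equations and their first time
   derivative, i.e. at most one differentiation) determines
     x_R' = phi(x_R,i_R,v_R,t)  and  i_R' = g(v_R',x_R,i_R,v_R,t).
   This is phrased pointwise along trajectories: whenever a differentiable
   trajectory satisfies, at time t, the equations (r t = 0) and their first
   derivative (r' t = 0), the two identities hold at t. *)
Definition resistance_like_with (R : realType) (nd nf nx p : nat)
    (fR : 'cV[R]_nd -> 'cV[R]_nx -> 'cV[R]_p -> 'cV[R]_p -> R -> 'cV[R]_nf)
    (dR : 'cV[R]_nx -> 'cV[R]_p -> 'cV[R]_p -> R -> 'cV[R]_nd)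
    (phi : 'cV[R]_nx -> 'cV[R]_p -> 'cV[R]_p -> R -> 'cV[R]_nx)
    (g : 'cV[R]_p * 'cV[R]_nx * 'cV[R]_p * 'cV[R]_p * R -> 'cV[R]_p) : Prop :=
  forall (x : R -> 'cV[R]_nx) (i v : R -> 'cV[R]_p) (t : R),
    (forall s, derivable x s 1) ->
    (forall s, derivable i s 1) ->
    (forall s, derivable v s 1) ->
    (forall s, derivable (fun s => dR (x s) (i s) (v s) s) s 1) ->
    let r := fun s =>
      fR (derive1 (fun s => dR (x s) (i s) (v s) s) s) (x s) (i s) (v s) s in
    r t = 0 -> derivable r t 1 -> derive1 r t = 0 ->
    derive1 x t = phi (x t) (i t) (v t) t /\
    derive1 i t = g ((derive1 v t), x t, i t, v t, t).

Definition resistance_like (R : realType) (nd nf nx p : nat)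
    (fR : 'cV[R]_nd -> 'cV[R]_nx -> 'cV[R]_p -> 'cV[R]_p -> R -> 'cV[R]_nf)
    (dR : 'cV[R]_nx -> 'cV[R]_p -> 'cV[R]_p -> R -> 'cV[R]_nd) : Prop :=
  exists phi g, resistance_like_with fR dR phi g.

Definition strongly_resistance_like (R : realType) (nd nf nx p : nat)
    (fR : 'cV[R]_nd -> 'cV[R]_nx -> 'cV[R]_p -> 'cV[R]_p -> R -> 'cV[R]_nf)
    (dR : 'cV[R]_nx -> 'cV[R]_p -> 'cV[R]_p -> R -> 'cV[R]_nd) : Prop :=
  exists phi g, resistance_like_with fR dR phi g /\
    continuous g /\
    strongly_monotone_wrt
      (fun (w : 'cV[R]_p) (y : 'cV[R]_nx * 'cV[R]_p * 'cV[R]_p * R) =>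
         g (w, y.1.1.1, y.1.1.2, y.1.2, y.2)).

Definition sym_posdef (R : realType) (n : nat) (M : 'M[R]_n) : Prop :=
  M^T = M /\ forall y : 'cV[R]_n, y != 0 -> 0 < (y^T *m M *m y) 0 0.
Definition sym_possemidef (R : realType) (n : nat) (M : 'M[R]_n) : Prop :=
  M^T = M /\ forall y : 'cV[R]_n, 0 <= (y^T *m M *m y) 0 0.

Definition orth_proj_onto_ker (R : realType) (n : nat) (Q K : 'M[R]_n) : Prop :=
  Q^T = Q /\ Q *m Q = Q /\ forall y : 'cV[R]_n, (K *m y == 0) = (Q *m y == y).

(* The homogenized eddy current element:
     C^T M_{nu,tau} C a' + C^T M_nu C a - X i_R = 0,   X^T a' - v_R = 0,
   with internal variable x_R = a and d_R(a,i_R,v_R,t) = a. *)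
Definition eddy_fR (R : realType) (f m : nat) (C : 'M[R]_(f, m))
    (Mnu Mnutau : 'M[R]_f) (X : 'cV[R]_m)
    (y : 'cV[R]_m) (a : 'cV[R]_m) (i v : 'cV[R]_1) (t : R) : 'cV[R]_(m + 1) :=
  col_mx (C^T *m Mnutau *m C *m y + C^T *m Mnu *m C *m a - X *m i)
         (X^T *m y - v).

Definition eddy_dR (R : realType) (m : nat)
    (a : 'cV[R]_m) (i v : 'cV[R]_1) (t : R) : 'cV[R]_m := a.

(* Write K := C^T M_{nu,tau} C and L := C^T M_nu C. The projector Q annihilates
   K and X, so Q applied to the first equation is the hidden constraint
   Q L a = 0. Differentiating it once and stacking it under K a' = X i_R - L a
   determines a', because [K; Q L] is injective: Q y = y on ker K and L is
   positive definite. As Q^T X = 0 puts X in the range of the symmetric K, we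
   have X = K z, and z^T times the first equation minus the second one is the
   second hidden constraint v_R = kappa i_R - z^T L a, where kappa = z^T K z > 0
   because K is positive semidefinite and X <> 0. Differentiating it once gives
   i_R' = kappa^-1 (v_R' + z^T L a'), which is affine in v_R' with slope
   kappa^-1 > 0. *)
From HB Require Import structures.
From mathcomp Require Import all_boot all_order all_algebra.
From mathcomp Require Import all_classical all_reals all_analysis.
From mathcomp Require Import ring lra.
Import Order.TTheory GRing.Theory Num.Theory.
Import numFieldNormedType.Exports.
Set Implicit Arguments.
Unset Strict Implicit.
Unset Printing Implicit Defensive.
Local Open Scope classical_set_scope.
Local Open Scope ring_scope.

Section MatrixFacts.
Variable F : fieldType.

Lemma mulmx_cVP m n (A B : 'M[F]_(m, n)) :
  (forall u : 'cV_n, A *m u = B *m u) -> A = B.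
Proof.
move=> AB; apply/trmx_inj/eqP/mulmxP => u.
by rewrite -[u]trmxK -!trmx_mul AB.
Qed.

Lemma ker0_linvmx m n (A : 'M[F]_(m, n)) :
  (forall y : 'cV_n, A *m y = 0 -> y = 0) ->
  exists B : 'M[F]_(n, m), B *m A = 1%:M.
Proof.
move=> A_inj; have /row_freeP[B AB] : row_free A^T.
  rewrite -kermx_eq0; apply/eqP/row_matrixP => k; rewrite row0.
  have /sub_kermxP uA : (row k (kermx A^T) <= kermx A^T)%MS by exact: row_sub.
  apply/trmx_inj; rewrite trmx0; apply: A_inj.
  by rewrite -[A in A *m _]trmxK -trmx_mul uA trmx0.
by exists B^T; rewrite -[A]trmxK -trmx_mul AB trmx1.
Qed.

Lemma mulmx_col0 m n p q (P : 'M[F]_(m, n + p)) (A : 'M[F]_(n, q)) :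
  P *m col_mx A 0 = lsubmx P *m A.
Proof. by rewrite -{1}[P]hsubmxK mul_row_col mulmx0 addr0. Qed.

End MatrixFacts.

Section OrthProjKer.
Variables (R : realType) (n : nat) (Q K : 'M[R]_n).
Hypothesis QK : orth_proj_onto_ker Q K.

Lemma orth_proj_kerP p (N : 'M[R]_(n, p)) : K *m N = 0 -> Q *m N = N.
Proof.
have [_ [_ kerK]] := QK; move=> KN; apply: mulmx_cVP => u.
by rewrite -mulmxA; apply/eqP; rewrite -kerK mulmxA KN mul0mx.
Qed.

Lemma orth_proj_ker_mulmx : K *m Q = 0.
Proof.
have [_ [QQ kerK]] := QK; apply: mulmx_cVP => u.
by rewrite mul0mx -mulmxA; apply/eqP; rewrite kerK mulmxA QQ.
Qed.

Lemma orth_proj_ker_mulmx_sym : K^T = K -> Q *m K = 0.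
Proof.
have [QT _] := QK; move=> KT.
by rewrite -QT -KT -trmx_mul orth_proj_ker_mulmx trmx0.
Qed.

Lemma orth_proj_ker_range (X : 'cV[R]_n) : Q^T *m X = 0 -> (X^T <= K)%MS.
Proof.
move=> QX; rewrite submxE.
by rewrite -(orth_proj_kerP (mulmx_coker K)) mulmxA -[Q]trmxK -trmx_mul QX
  trmx0 mul0mx.
Qed.

End OrthProjKer.

Lemma quadratic_ge0_linear_eq0 (R : realFieldType) (a b : R) :
  0 <= b -> (forall s, 0 <= 2 * s * a + s ^+ 2 * b) -> a = 0.
Proof.
move=> b_ge0 ge0; pose s := - a / (b + 1).
have b1_gt0 : 0 < b + 1 by rewrite ltr_wpDl.
have aE : a = - s * (b + 1) by rewrite /s !mulNr opprK divfK ?gt_eqF.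
have := ge0 s; rewrite aE => s_ge0.
suff -> : s = 0 by rewrite oppr0 mul0r.
by apply/eqP; rewrite -sqrf_eq0 eq_le sqr_ge0 andbT; nra.
Qed.

Section QuadraticForms.
Variables (R : realType) (n : nat).
Implicit Types (K : 'M[R]_n) (w : 'cV[R]_n).

Lemma sym_possemidef_quad_eq0 K w :
  sym_possemidef K -> (w^T *m K *m w) 0 0 = 0 -> K *m w = 0.
Proof.
move=> [KT K_ge0] wKw0.
suff wK : w^T *m K = 0 by rewrite -KT -[w]trmxK -trmx_mul wK trmx0.
apply: mulmx_cVP => u; rewrite mul0mx [LHS]mx11_scalar.
set a := (w^T *m K *m u) 0 0; set b := (u^T *m K *m u) 0 0.
have uKw : (u^T *m K *m w) 0 0 = a.
  have -> : u^T *m K *m w = (w^T *m K *m u)^T.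
    by rewrite !trmx_mul trmxK KT mulmxA.
  by rewrite mxE.
suff -> : a = 0 by rewrite -scalemx1 scale0r.
apply: (@quadratic_ge0_linear_eq0 R a b (K_ge0 u)) => s.
have := K_ge0 (w + s *: u).
have entryD (A B : 'M[R]_1) : (A + B) 0 0 = A 0 0 + B 0 0 by rewrite mxE.
have entryZ (A : 'M[R]_1) : (s *: A) 0 0 = s * A 0 0 by rewrite mxE.
rewrite !linearD /= !linearZ /= !mulmxDl -!scalemxAl !(entryD, entryZ).
by rewrite wKw0 uKw -/a -/b; congr (_ <= _); ring.
Qed.

Lemma sym_possemidef_quad_gt0 K w :
  sym_possemidef K -> K *m w != 0 -> 0 < (w^T *m K *m w) 0 0.
Proof.
move=> K_psd Kw0; rewrite lt_def (proj2 K_psd) andbT.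
by apply: contraNneq Kw0 => /(sym_possemidef_quad_eq0 K_psd) ->.
Qed.

Lemma orth_proj_ker_posdef_inj (Q K L : 'M[R]_n) w : orth_proj_onto_ker Q K ->
  sym_posdef L -> K *m w = 0 -> Q *m L *m w = 0 -> w = 0.
Proof.
move=> QK [_ L_gt0] Kw QLw; apply/eqP/negP => /negP/L_gt0.
have -> : w^T *m L *m w = w^T *m (Q *m L *m w).
  by rewrite -{1}(orth_proj_kerP QK Kw) trmx_mul (proj1 QK) !mulmxA.
by rewrite QLw mulmx0 mxE ltxx.
Qed.

End QuadraticForms.

Section Congruence.
Variables (R : realType) (n m : nat) (C : 'M[R]_(n, m)) (M : 'M[R]_n).

Lemma quad_congr (y : 'cV[R]_m) :
  (C *m y)^T *m M *m (C *m y) = y^T *m (C^T *m M *m C) *m y.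
Proof. by rewrite trmx_mul !mulmxA. Qed.

Lemma trmx_congr : M^T = M -> (C^T *m M *m C)^T = C^T *m M *m C.
Proof. by move=> MT; rewrite !trmx_mul trmxK MT mulmxA. Qed.

Lemma sym_possemidef_congr :
  sym_possemidef M -> sym_possemidef (C^T *m M *m C).
Proof.
by move=> [MT M_ge0]; split=> [|y]; [exact: trmx_congr | rewrite -quad_congr].
Qed.

Lemma sym_posdef_congr :
  \rank C = m -> sym_posdef M -> sym_posdef (C^T *m M *m C).
Proof.
move=> rkC [MT M_gt0]; split=> [|y y0]; first exact: trmx_congr.
rewrite -quad_congr M_gt0 //; apply: contraNneq y0 => Cy0.
have CT_free : row_free C^T by rewrite /row_free mxrank_tr rkC.
by rewrite -trmx_eq0 -(mulmx_free_eq0 _ CT_free) -trmx_mul Cy0 trmx0.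
Qed.

End Congruence.

Lemma continuous_fst (T U V : topologicalType) (h : T -> U * V) :
  continuous h -> continuous (fun s => (h s).1).
Proof. by move=> hc x; apply: (continuous_comp (hc x)); exact: cvg_fst. Qed.

Lemma continuous_snd (T U V : topologicalType) (h : T -> U * V) :
  continuous h -> continuous (fun s => (h s).2).
Proof. by move=> hc x; apply: (continuous_comp (hc x)); exact: cvg_snd. Qed.

Lemma is_derive_unique (R : numFieldType) (V W : normedModType R) (f : V -> W)
    x v (df dg : W) :
  is_derive x v f df -> is_derive x v f dg -> df = dg.
Proof. by move=> [_ <-] [_ <-]. Qed.

Section MatrixAnalysis.
Variable R : realType.

Lemma mulmx_continuous n p q (A : 'M[R]_(n, p)) :
  continuous (fun y : 'M[R]_(p, q) => A *m y).
Proof.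
have -> : (fun y : 'M[R]_(p, q) => A *m y) =
    fun y => \sum_i \sum_j y i j *: (A *m delta_mx i j).
  apply/funext => y; rewrite {1}(matrix_sum_delta y) linear_sum.
  apply: eq_bigr => i _; rewrite linear_sum; apply: eq_bigr => j _.
  exact: linearZ.
apply: (continuous_big add_continuous) => i _.
apply: (continuous_big add_continuous) => j _ y.
exact/continuousZr_tmp/coord_continuous.
Qed.

Lemma continuous_mulmx (T : topologicalType) n p q (A : 'M[R]_(n, p))
    (h : T -> 'M[R]_(p, q)) :
  continuous h -> continuous (fun s => A *m h s).
Proof. by move=> hc x; apply: (continuous_comp (hc x)); exact: mulmx_continuous. Qed.

Lemma continuous_addmx (T : topologicalType) p q (f g : T -> 'M[R]_(p, q)) :
  continuous f -> continuous g -> continuous (fun s => f s + g s).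
Proof. by move=> fc gc x; apply: continuousD; [exact: fc | exact: gc]. Qed.

Lemma continuous_submx (T : topologicalType) p q (f g : T -> 'M[R]_(p, q)) :
  continuous f -> continuous g -> continuous (fun s => f s - g s).
Proof. by move=> fc gc x; apply: continuousB; [exact: fc | exact: gc]. Qed.

Lemma is_derive_derive1 (V : normedModType R) (h : R -> V) t :
  derivable h t 1 -> is_derive t 1 h (derive1 h t).
Proof. by move=> /derivableP; rewrite derive1E. Qed.

Lemma is_derive_mulmx (V : normedModType R) n p q (A : 'M[R]_(n, p))
    (h : V -> 'M[R]_(p, q)) t v dh :
  is_derive t v h dh -> is_derive t v (fun s => A *m h s) (A *m dh).
Proof.
move=> [h_der <-].
have quotA : (fun e : R => e^-1 *: (A *m h (e *: v + t) - A *m h t))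
    = (fun y => A *m y) \o (fun e : R => e^-1 *: (h (e *: v + t) - h t)).
  by apply/funext => e /=; rewrite -mulmxBr scalemxAr.
have cvgA : (fun e : R => e^-1 *: (A *m h (e *: v + t) - A *m h t)) @ 0^'
    --> A *m 'D_v h t.
  by rewrite quotA; apply: continuous_cvg; [exact: mulmx_continuous | exact: h_der].
by apply: DeriveDef; [apply/cvg_ex; eexists; exact: cvgA | exact: cvg_lim].
Qed.

Lemma is_derive_mulmx_eq0 (V : normedModType R) n p q (E : 'M[R]_(n, p))
    (r : V -> 'M[R]_(p, q)) (h : V -> 'M[R]_(n, q)) t v dh :
  is_derive t v r 0 -> (forall s, E *m r s = h s) -> is_derive t v h dh ->
  dh = 0.
Proof.
move=> r_der Erh h_der; have := is_derive_mulmx E r_der.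
by rewrite mulmx0 (funext Erh); exact: is_derive_unique.
Qed.

End MatrixAnalysis.

Lemma strongly_monotone_wrt_affine (R : realType) n (Y : Type)
    (F : 'cV[R]_n -> Y -> 'cV[R]_n) c :
  0 < c -> (forall y w wb, F w y - F wb y = c *: (w - wb)) ->
  strongly_monotone_wrt F.
Proof.
move=> c_gt0 FE; exists c; split=> // y u ub.
rewrite FE /dotv mulr_sumr; apply: ler_sum => k _.
by rewrite !mxE -mulrA.
Qed.

Section EddyElement.
Variables (R : realType) (m : nat) (K L Q : 'M[R]_m) (X z : 'cV[R]_m).
Variable P : 'M[R]_(m, m + m).

Definition eddy_residual (y a : 'cV[R]_m) (i v : 'cV[R]_1) (t : R) :=
  col_mx (K *m y + L *m a - X *m i) (X^T *m y - v).

Definition eddy_phi (a : 'cV[R]_m) (i v : 'cV[R]_1) (t : R) :=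
  lsubmx P *m (X *m i - L *m a).

Definition eddy_kappa : R := (z^T *m X) 0 0.

Definition eddy_g (p : 'cV[R]_1 * 'cV[R]_m * 'cV[R]_1 * 'cV[R]_1 * R) :=
  eddy_kappa^-1 *: (p.1.1.1.1 + z^T *m L *m eddy_phi p.1.1.1.2 p.1.1.2 p.1.2 p.2).

Hypotheses (QK : Q *m K = 0) (QX : Q *m X = 0) (zK : z^T *m K = X^T).
Hypothesis PK : P *m col_mx K (Q *m L) = 1%:M.
Hypothesis kappa_gt0 : 0 < eddy_kappa.

Lemma mul_Q_eddy_residual y a i v t :
  row_mx Q 0 *m eddy_residual y a i v t = Q *m L *m a.
Proof.
rewrite mul_row_col mul0mx addr0 mulmxBr mulmxDr !mulmxA QK QX !mul0mx.
by rewrite add0r subr0.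
Qed.

Lemma mul_z_eddy_residual y a i v t :
  row_mx z^T (-1) *m eddy_residual y a i v t =
  z^T *m L *m a - z^T *m X *m i + v.
Proof.
rewrite mul_row_col mulNmx mul1mx mulmxBr mulmxDr !mulmxA zK opprB.
by rewrite addrC !addrA subrK [RHS]addrC addrA.
Qed.

Lemma eddy_phiP y a i v t : eddy_residual y a i v t = 0 ->
  Q *m L *m y = 0 -> y = eddy_phi a i v t.
Proof.
move=> /eqP; rewrite col_mx_eq0 => /andP[/eqP res0 _] QLy.
have Ky : K *m y = X *m i - L *m a.
  by apply/eqP; rewrite -subr_eq0 opprB addrA res0.
by rewrite -[y]mul1mx -PK -mulmxA mul_col_mx Ky QLy mulmx_col0.
Qed.

Lemma eddy_resistance_like :
  resistance_like_with eddy_residual (fun a _ _ _ => a) eddy_phi eddy_g.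
Proof.
move=> x i v t x_der i_der v_der _ r r0 r_der r'0.
have r_is_der : is_derive t 1 r 0.
  by rewrite -r'0; exact: is_derive_derive1.
set x' := derive1 x t; set i' := derive1 i t; set v' := derive1 v t.
have QLx' : Q *m L *m x' = 0.
  apply: (is_derive_mulmx_eq0 r_is_der (fun s => mul_Q_eddy_residual _ _ _ _ _)).
  exact/is_derive_mulmx/is_derive_derive1.
have x'E : x' = eddy_phi (x t) (i t) (v t) t by exact: eddy_phiP r0 QLx'.
split=> //.
have : z^T *m L *m x' - z^T *m X *m i' + v' = 0.
  apply: (is_derive_mulmx_eq0 r_is_der (fun s => mul_z_eddy_residual _ _ _ _ _) (h :=
    (fun s => z^T *m L *m x s) - (fun s => z^T *m X *m i s) + v)).
  apply: is_deriveD; last exact: is_derive_derive1.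
  by apply: is_deriveB; apply: is_derive_mulmx; exact: is_derive_derive1.
rewrite [z^T *m X]mx11_scalar mul_scalar_mx -/eddy_kappa => /eqP.
rewrite addrAC subr_eq0 eq_sym => /eqP kappa_i'.
rewrite /eddy_g /= -x'E addrC -kappa_i' scalerA mulVf ?scale1r //.
by rewrite gt_eqF.
Qed.

Lemma eddy_g_continuous : continuous eddy_g.
Proof.
have -> : eddy_g = fun p => eddy_kappa^-1%:M *m
    (p.1.1.1.1 + z^T *m L *m (lsubmx P *m (X *m p.1.1.2 - L *m p.1.1.1.2))).
  by apply/funext => p; rewrite mul_scalar_mx.
apply/continuous_mulmx/continuous_addmx.
  by do 4!apply: continuous_fst => ?; exact: cvg_id.
do 2!apply: continuous_mulmx; apply: continuous_submx; apply: continuous_mulmx.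
  by apply: continuous_snd; do 2!apply: continuous_fst => ?; exact: cvg_id.
by apply: continuous_snd; do 3!apply: continuous_fst => ?; exact: cvg_id.
Qed.

Lemma eddy_g_strongly_monotone :
  strongly_monotone_wrt (fun w (y : 'cV[R]_m * 'cV[R]_1 * 'cV[R]_1 * R) =>
    eddy_g (w, y.1.1.1, y.1.1.2, y.1.2, y.2)).
Proof.
apply: (@strongly_monotone_wrt_affine _ _ _ _ eddy_kappa^-1).
  by rewrite invr_gt0.
by move=> y w wb; rewrite /eddy_g -scalerBr opprD addrACA subrr addr0.
Qed.

End EddyElement.

Theorem proposition9 (R : realType) (f m : nat) (C : 'M[R]_(f, m))
    (Mnu Mnutau : 'M[R]_f) (X : 'cV[R]_m) (Qtau : 'M[R]_m) :
  \rank C = m ->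
  sym_posdef Mnu ->
  sym_possemidef Mnutau ->
  X != 0 ->
  orth_proj_onto_ker Qtau (C^T *m Mnutau *m C) ->
  Qtau^T *m X = 0 ->
  strongly_resistance_like (eddy_fR C Mnu Mnutau X) (@eddy_dR R m).
Proof.
move=> rkC Mnu_pd Mnutau_psd X_neq0 Q_proj QTX.
set K := C^T *m Mnutau *m C in Q_proj *; set L := C^T *m Mnu *m C.
have K_psd : sym_possemidef K := sym_possemidef_congr C Mnutau_psd.
have L_pd : sym_posdef L := sym_posdef_congr rkC Mnu_pd.
have [zT XTE] := submxP (orth_proj_ker_range Q_proj QTX).
set z := zT^T.
have zK : z^T *m K = X^T by rewrite /z trmxK.
have XE : X = K *m z by rewrite -[X]trmxK XTE trmx_mul (proj1 K_psd).
have kappa_gt0 : 0 < eddy_kappa X z.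
  by rewrite /eddy_kappa XE mulmxA sym_possemidef_quad_gt0 // -XE.
have [P PK] : exists P, P *m col_mx K (Qtau *m L) = 1%:M.
  apply: ker0_linvmx => y; rewrite mul_col_mx => /eqP.
  rewrite col_mx_eq0 => /andP[/eqP Ky /eqP QLy].
  exact: orth_proj_ker_posdef_inj Q_proj L_pd Ky QLy.
have QK := orth_proj_ker_mulmx_sym Q_proj (proj1 K_psd).
have QX : Qtau *m X = 0 by rewrite -(proj1 Q_proj).
exists (eddy_phi L X P), (eddy_g L X z P); split; last split.
- exact: eddy_resistance_like QK QX zK PK kappa_gt0.
- exact: eddy_g_continuous.
- exact: eddy_g_strongly_monotone.
Qed.
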